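(* Let $(R,\mathfrak m,k)$ be a stretched Artinian local ring with $n=\dim_k\mathfrak m/\mathfrak m^2$ and $r=\dim_k\operatorname{soc}(R)$. Then either $R$ is Gorenstein, or $R\cong S\times_kT$ where $(S,\mathfrak m_S)$ is a stretched Artinian Gorenstein local ring with $\operatorname{edim}(S)=n-r+1$ and $(T,\mathfrak m_T)$ is a local ring with $\mathfrak m_T^2=0$ and $\operatorname{edim}(T)=r-1$. In fact, if $\operatorname{soc}(R)\subseteq\mathfrak m^2$ then $R$ is Gorenstein, and if $x_1\in\operatorname{soc}(R)\setminus\mathfrak m^2$ is part of a minimal generating set $x_1,\dots,x_n$ of $\mathfrak m$, then $R\cong R/(x_1)\times_k R/(x_2,\dots,x_n)$.
   Context: An Artinian local ring is stretched if $\mathfrak m^2$ is a principal ideal. $\operatorname{soc}(R)=(0:_R\mathfrak m)$, $\operatorname{edim}$ denotes embedding dimension. The fibre product of local rings $S,T$ with common residue field $k$ is $S\times_kT=\{(a,b):\pi_S(a)=\pi_T(b)\}$ with $\pi_S,\pi_T$ the residue maps. *)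

From HB Require Import structures.
From mathcomp Require Import all_boot all_algebra.
Set Implicit Arguments. Unset Strict Implicit. Unset Printing Implicit Defensive.
Import GRing.Theory.
Local Open Scope ring_scope.

Section LocalRingDefs.
Variable R : comUnitRingType.

(* the set of non-units; for a local ring this is the maximal ideal m *)
Definition mx (x : R) : Prop := x \isn't a GRing.unit.

(* R is local: the non-units form an ideal (closure under R-multiples
   and 0 is automatic in a nontrivial commutative ring). *)
Definition is_local : Prop := forall x y : R, mx x -> mx y -> mx (x + y).

Definition is_ideal (I : R -> Prop) : Prop :=
  [/\ I 0, (forall x y, I x -> I y -> I (x + y)) & (forall a x, I x -> I (a * x))].

Definition artinian : Prop :=
  forall I : nat -> R -> Prop, (forall i, is_ideal (I i)) ->
    (forall i x, I i.+1 x -> I i x) ->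
    exists N, forall i, (N <= i)%N -> forall x, I i x <-> I N x.

Definition msq (x : R) : Prop :=
  exists t (a b : 'I_t -> R), (forall i, mx (a i) /\ mx (b i)) /\
    x = \sum_(i < t) a i * b i.

Definition stretched : Prop :=
  exists g : R, forall x, msq x <-> exists c, x = c * g.

Definition soc (x : R) : Prop := forall y, mx y -> x * y = 0.

(* v_1..v_t are linearly independent over k = R/m modulo the ideal J:
   a k-linear relation (coefficients lifted to R) lying in J has all
   coefficients in m *)
Definition indep_mod (J : R -> Prop) t (v : 'I_t -> R) : Prop :=
  forall c : 'I_t -> R, J (\sum_(i < t) c i * v i) -> forall i, mx (c i).

(* the k-vector space (V + J)/J, with V an R-submodule killed by m modulo J,
   has dimension d: maximal size of a k-independent family *)
Definition kdim_eq (V J : R -> Prop) (d : nat) : Prop :=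
  (exists v : 'I_d -> R, (forall i, V (v i)) /\ indep_mod J v) /\
  (forall t (v : 'I_t -> R), (forall i, V (v i)) -> indep_mod J v -> (t <= d)%N).

Definition edim_eq (n : nat) : Prop := kdim_eq mx msq n.

Definition socdim_eq (r : nat) : Prop := kdim_eq soc (fun x => x = 0) r.

Definition gorenstein : Prop := socdim_eq 1.

End LocalRingDefs.

Definition residue_map (S : comUnitRingType) (k : fieldType)
  (pi : {rmorphism S -> k}) : Prop :=
  (forall c : k, exists a, pi a = c) /\ (forall a, pi a = 0 <-> mx a).

(* x |-> (p x, q x) is a ring isomorphism from R onto the fibre product
   S x_k T = {(a,b) | piS a = piT b} *)
Definition fibre_iso (R S T : comUnitRingType) (k : fieldType)
  (p : {rmorphism R -> S}) (q : {rmorphism R -> T})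
  (piS : {rmorphism S -> k}) (piT : {rmorphism T -> k}) : Prop :=
  residue_map piS /\ residue_map piT /\
  (forall x y, p x = p y -> q x = q y -> x = y) /\
  (forall a b, piS a = piT b <-> exists x, p x = a /\ q x = b).

From HB Require Import structures.
From mathcomp Require Import all_boot all_algebra ring_quotient generic_quotient.
From mathcomp Require Import boolp ring zify.
Set Implicit Arguments. Unset Strict Implicit. Unset Printing Implicit Defensive.
Import GRing.Theory.
Local Open Scope ring_scope.

(* Write m for the maximal ideal, k = R/m and m^2 = (g). If g = y z with y, z in m,
   multiplication by m maps (y^j g) into (y^(j+1) g); hence the last nonzero y^j g
   spans every socle element of m^2, and soc(R) in m^2 forces a one-dimensional
   socle. Otherwise extend a generator h of soc(R) /\ m^2 by socle elements
   z_1, ..., z_(r-1) to a basis of soc(R); the z_i are independent in m/m^2 = k^n.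
   With Z = (z_1, ..., z_(r-1)) and W the preimage in m of a complement of the span
   of the z_i in k^n, one has Z /\ W = 0 and Z + W = m, which presents R as the
   fibre product of R/Z and R/W over k. The socle of R/Z is spanned by h, and the
   maximal ideal of R/W squares to 0. The same criterion, applied to Z = (x_i0) and
   W = (x_j : j <> i0), gives the splitting along a socle generator. *)

Definition catf (T : Type) m n (a : 'I_m -> T) (b : 'I_n -> T) : 'I_(m + n) -> T :=
  fun i => match split i with inl j => a j | inr k => b k end.

Section Catf.
Variables (T : Type) (m n : nat) (a : 'I_m -> T) (b : 'I_n -> T).

Lemma catf_lshift j : catf a b (lshift n j) = a j.
Proof. by rewrite /catf -[lshift _ _]/(unsplit (inl _ j)) unsplitK. Qed.

Lemma catf_rshift j : catf a b (rshift m j) = b j.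
Proof. by rewrite /catf -[rshift _ _]/(unsplit (inr _ j)) unsplitK. Qed.

Lemma catfP (P : T -> Prop) :
  (forall i, P (a i)) -> (forall j, P (b j)) -> forall i, P (catf a b i).
Proof. by move=> Pa Pb i; rewrite /catf; case: split. Qed.

End Catf.

Lemma big_catf (R : pzSemiRingType) m n (c : 'I_(m + n) -> R) (a : 'I_m -> R) (b : 'I_n -> R) :
  \sum_(i < m + n) c i * catf a b i =
  \sum_(i < m) c (lshift n i) * a i + \sum_(i < n) c (rshift m i) * b i.
Proof.
by rewrite big_split_ord; congr (_ + _); apply: eq_bigr => i _;
  rewrite ?catf_lshift ?catf_rshift.
Qed.

Lemma big_catf2 (R : pzSemiRingType) m n (c : 'I_m -> R) (d : 'I_n -> R)
    (a : 'I_m -> R) (b : 'I_n -> R) :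
  \sum_(i < m + n) catf c d i * catf a b i =
  \sum_(i < m) c i * a i + \sum_(i < n) d i * b i.
Proof.
by rewrite big_catf; congr (_ + _); apply: eq_bigr => i _;
  rewrite ?catf_lshift ?catf_rshift.
Qed.

Section Ideals.
Variables (R : comUnitRingType) (J : R -> Prop).
Hypothesis idJ : is_ideal J.

Lemma ideal0 : J 0. Proof. by case: idJ. Qed.
Lemma idealD x y : J x -> J y -> J (x + y). Proof. by case: idJ => _ + _; apply. Qed.
Lemma idealMl a x : J x -> J (a * x). Proof. by case: idJ => _ _; apply. Qed.
Lemma idealN x : J x -> J (- x). Proof. by rewrite -mulN1r; apply: idealMl. Qed.
Lemma idealB x y : J x -> J y -> J (x - y).
Proof. by move=> Jx Jy; apply: idealD => //; apply: idealN. Qed.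
Lemma ideal_sum t (F : 'I_t -> R) : (forall i, J (F i)) -> J (\sum_(i < t) F i).
Proof. by move=> JF; apply: (big_ind J); [exact: ideal0 | exact: idealD | move=> i _]. Qed.

End Ideals.

Section IdealExamples.
Variable R : comUnitRingType.

Lemma zero_ideal : is_ideal (fun x : R => x = 0).
Proof. by split => // [x y -> ->|a x ->]; rewrite ?addr0 ?mulr0. Qed.

Lemma soc_ideal : is_ideal (@soc R).
Proof.
split=> [y _|x y sx sy w mw|a x sx w mw]; first by rewrite mul0r.
  by rewrite mulrDl sx ?sy ?addr0.
by rewrite -mulrA sx ?mulr0.
Qed.

Lemma principal_ideal (a : R) : is_ideal (fun y => exists c, y = c * a).
Proof.
split; first by exists 0; rewrite mul0r.
  by move=> y z [c ->] [d ->]; exists (c + d); rewrite mulrDl.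
by move=> b y [c ->]; exists (b * c); rewrite mulrA.
Qed.

Lemma span_ideal t (P : pred 'I_t) (x : 'I_t -> R) :
  is_ideal (fun y => exists c : 'I_t -> R, y = \sum_(j < t | P j) c j * x j).
Proof.
split; first by exists (fun _ => 0); rewrite big1 // => j _; rewrite mul0r.
  move=> y z [c ->] [d ->]; exists (fun j => c j + d j); rewrite -big_split /=.
  by apply: eq_bigr => j _; rewrite mulrDl.
move=> b y [c ->]; exists (fun j => b * c j); rewrite mulr_sumr.
by apply: eq_bigr => j _; rewrite mulrA.
Qed.

End IdealExamples.

Section LocalRing.
Variable R : comUnitRingType.
Implicit Types x y a b : R.

Lemma mx0 : mx (0 : R). Proof. by rewrite /mx unitr0. Qed.
Lemma not_mx1 : ~ mx (1 : R). Proof. by rewrite /mx unitr1. Qed.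
Lemma mxMl a x : mx x -> mx (a * x).
Proof. by rewrite /mx unitrM negb_and => ->; rewrite orbT. Qed.
Lemma mxMr a x : mx x -> mx (x * a).
Proof. by rewrite mulrC; apply: mxMl. Qed.
Lemma mxN x : mx x -> mx (- x). Proof. by rewrite /mx unitrN. Qed.
Lemma unit_not_mx x : x \is a GRing.unit -> ~ mx x. Proof. by rewrite /mx => ->. Qed.
Lemma mx_or_unit x : mx x \/ x \is a GRing.unit.
Proof. by rewrite /mx; case: (x \is a GRing.unit); [right|left]. Qed.

Lemma unit_mul_eq0 (u x : R) : u \is a GRing.unit -> u * x = 0 -> x = 0.
Proof. by move=> Uu ux0; rewrite -[x]mul1r -(mulVr Uu) -mulrA ux0 mulr0. Qed.

Lemma msq0 : msq (0 : R).
Proof. by exists 0%N, (fun _ => 0), (fun _ => 0); split; [case | rewrite big_ord0]. Qed.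

Lemma msqMM a b : mx a -> mx b -> msq (a * b).
Proof. by move=> ma mb; exists 1%N, (fun _ => a), (fun _ => b); rewrite big_ord1. Qed.

Lemma msqD x y : msq x -> msq y -> msq (x + y).
Proof.
move=> [t [a [b [mab ->]]]] [t' [a' [b' [mab' ->]]]].
exists (t + t')%N, (catf a a'), (catf b b'); split; last by rewrite big_catf2.
by move=> i; rewrite /catf; case: split => j; [apply: mab | apply: mab'].
Qed.

Lemma msqMl a x : msq x -> msq (a * x).
Proof.
move=> [t [u [v [muv ->]]]]; exists t, (fun i => a * u i), v; split.
  by move=> i; have [mu mv] := muv i; split; first exact: mxMl.
by rewrite mulr_sumr; apply: eq_bigr => i _; rewrite mulrA.
Qed.

Lemma msq_ideal : is_ideal (@msq R).
Proof. by split; [exact: msq0 | exact: msqD | exact: msqMl]. Qed.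

Lemma soc_mx (h s : R) : h != 0 -> mx h -> soc s -> mx s.
Proof.
move=> nz_h mh ss; case: (mx_or_unit s) => // Us.
by case/eqP: nz_h; apply: (unit_mul_eq0 Us); apply: ss.
Qed.

Hypothesis loc : is_local R.

Lemma mxB x y : mx x -> mx y -> mx (x - y).
Proof. by move=> mx_x my; apply: loc => //; apply: mxN. Qed.

Lemma mx_ideal : is_ideal (@mx R).
Proof. by split; [exact: mx0 | exact: loc | exact: mxMl]. Qed.

Lemma mx_comb t (c v : 'I_t -> R) : (forall i, mx (v i)) -> mx (\sum_(i < t) c i * v i).
Proof. by move=> mv; apply: (ideal_sum mx_ideal) => i; apply: mxMl. Qed.

Lemma unitDmx u x : u \is a GRing.unit -> mx x -> (u + x) \is a GRing.unit.
Proof.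
move=> Uu mx_x; case: (mx_or_unit (u + x)) => // m_ux.
by have := mxB m_ux mx_x; rewrite addrK => /(unit_not_mx Uu).
Qed.

Lemma mx_fix_eq0 d x : mx d -> x = d * x -> x = 0.
Proof.
move=> md x_dx; apply: (@unit_mul_eq0 (1 - d)); first by apply: unitDmx (unitr1 _) (mxN md).
by rewrite mulrBl mul1r -x_dx subrr.
Qed.

Lemma msq_mx x : msq x -> mx x.
Proof. by move=> [t [a [b [mab ->]]]]; apply: mx_comb => i; case: (mab i). Qed.

End LocalRing.

Record pideal (R : comUnitRingType) := PIdeal {
  pI : R -> Prop; pI_ideal : is_ideal pI; pI_proper : ~ pI 1 }.

Definition mkpideal (R : comUnitRingType) (I : R -> Prop) (idI : is_ideal I)
  (Im : forall y, I y -> mx y) : pideal R :=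
  @PIdeal R I idI (fun I1 => not_mx1 (Im 1 I1)).

Definition pIb (R : comUnitRingType) (J : pideal R) : R -> bool := fun x => `[< pI J x >].

Lemma pIb_closed (R : comUnitRingType) (J : pideal R) : idealr_closed (pIb J).
Proof.
case: J => I idI I1; split; rewrite /pIb /=.
- exact/asboolP/(ideal0 idI).
- exact/asboolP.
- move=> a u v /asboolP Iu /asboolP Iv; apply/asboolP.
  by apply: (idealD idI) => //; apply: (idealMl idI).
Qed.

HB.instance Definition _ (R : comUnitRingType) (J : pideal R) :=
  isIdealr.Build R (pIb J) (pIb_closed J).

Definition quot_ring (R : comUnitRingType) (J : pideal R) :=
  {ideal_quot (Idealr.clone R (pIb J) _)}.
HB.instance Definition _ (R : comUnitRingType) (J : pideal R) :=
  GRing.ComNzRing.on (quot_ring J).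

(* ring_quotient only provides a ring structure on R/J; the inverse is chosen classically *)
Section QuotientUnits.
Variables (R : comUnitRingType) (J : pideal R).
Local Notation Q := (quot_ring J).

Definition qunit (x : Q) : bool := `[< exists y, y * x = 1 >].
Definition qinv (x : Q) : Q :=
  match pselect (exists y, y * x = 1) with
  | left H => projT1 (cid H) | right _ => x end.

Lemma qmulVx : {in qunit, left_inverse 1 qinv *%R}.
Proof. by move=> x /asboolP ux; rewrite /qinv; case: pselect => // H; case: (cid H). Qed.
Lemma qunitPl (x y : Q) : y * x = 1 -> qunit x.
Proof. by move=> yx1; apply/asboolP; exists y. Qed.
Lemma qinv_out : {in [predC qunit], qinv =1 id}.
Proof. by move=> x; rewrite inE => /asboolPn nux; rewrite /qinv; case: pselect. Qed.

HB.instance Definition _ := GRing.ComNzRing_hasMulInverse.Build Q qmulVx qunitPl qinv_out.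
End QuotientUnits.

Definition qproj (R : comUnitRingType) (J : pideal R) : {rmorphism R -> quot_ring J} :=
  (\pi_(quot_ring J))%qT.

Section QuotientMap.
Variables (R : comUnitRingType) (J : pideal R).

Lemma qproj_repr (s : quot_ring J) : qproj J (repr s) = s. Proof. exact: reprK. Qed.

Lemma qproj_surj (s : quot_ring J) : exists y, qproj J y = s.
Proof. by exists (repr s); exact: qproj_repr. Qed.

Lemma qproj_eq0 y : qproj J y = 0 <-> pI J y.
Proof.
have := @Quotient.idealrBE R (Idealr.clone R (pIb J) _) y 0.
rewrite subr0 -[0 : quot_ring J](rmorph0 (qproj J)) => yJ.
by split=> [/eqP|Jy]; [rewrite -yJ => /asboolP | apply/eqP; rewrite -yJ; exact/asboolP].
Qed.

Lemma qproj_eq y z : qproj J y = qproj J z <-> pI J (y - z).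
Proof.
rewrite -qproj_eq0 rmorphB; split=> [->|/eqP]; first by rewrite subrr.
by rewrite subr_eq0 => /eqP.
Qed.

Lemma qproj_sum t (c : 'I_t -> quot_ring J) (u : 'I_t -> R) :
  \sum_(i < t) c i * qproj J (u i) = qproj J (\sum_(i < t) repr (c i) * u i).
Proof. by rewrite rmorph_sum; apply: eq_bigr => i _; rewrite rmorphM qproj_repr. Qed.

Lemma artinian_quot : artinian R -> artinian (quot_ring J).
Proof.
move=> art I idI decI.
pose I' i y := I i (qproj J y).
have idI' i : is_ideal (I' i).
  split=> [|x y|a x]; rewrite /I' ?rmorph0 ?rmorphD ?rmorphM.
  - exact: ideal0.
  - exact: idealD.
  - exact: idealMl.
have [N stabN] := art I' idI' (fun i x => decI i _).
by exists N => i le_Ni s; have [y <-] := qproj_surj s; apply: stabN.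
Qed.

End QuotientMap.

Section LocalQuotient.
Variables (R : comUnitRingType) (loc : is_local R) (J : pideal R).
Hypothesis Jm : forall y, pI J y -> mx y.

Lemma qproj_unit y : (qproj J y \is a GRing.unit) <-> (y \is a GRing.unit).
Proof.
split=> [/unitrP [s [sy1 _]]|Uy]; last by rewrite rmorph_unit.
move: sy1; have [z <-] := qproj_surj s.
rewrite -rmorphM -(rmorph1 (qproj J)) qproj_eq => /Jm m_zy1.
by have := unitDmx loc (unitr1 R) m_zy1; rewrite addrC subrK unitrM => /andP [].
Qed.

Lemma qproj_mx y : mx (qproj J y) <-> mx y.
Proof. by rewrite /mx; split=> /negP nU; apply/negP => U; apply: nU; apply/qproj_unit. Qed.

Lemma local_quot : is_local (quot_ring J).
Proof.
move=> s t; have [y <-] := qproj_surj s; have [z <-] := qproj_surj t.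
by rewrite -rmorphD !qproj_mx; apply: loc.
Qed.

Lemma msq_quot (s : quot_ring J) : msq s <-> exists y, msq y /\ qproj J y = s.
Proof.
split=> [[t [a [b [mab ->]]]]|[y [[t [a [b [mab ->]]]] <-]]].
  exists (\sum_(i < t) repr (a i) * repr (b i)); split; last first.
    by rewrite rmorph_sum; apply: eq_bigr => i _; rewrite rmorphM !qproj_repr.
  apply: (ideal_sum (msq_ideal R)) => i; have [ma mb] := mab i.
  by apply: msqMM; rewrite -qproj_mx qproj_repr.
exists t, (fun i => qproj J (a i)), (fun i => qproj J (b i)); split.
  by move=> i; rewrite !qproj_mx; apply: mab.
by rewrite rmorph_sum; apply: eq_bigr => i _; rewrite rmorphM.
Qed.

Lemma stretched_quot : stretched R -> stretched (quot_ring J).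
Proof.
move=> [g msqg]; exists (qproj J g) => s; rewrite msq_quot; split.
  by move=> [y [/msqg [c ->] <-]]; exists (qproj J c); rewrite rmorphM.
move=> [c ->]; have [c' <-] := qproj_surj c; exists (c' * g).
by rewrite rmorphM; split => //; apply/msqg; exists c'.
Qed.

(* the preimage of m_S^2 under R -> S = R/J *)
Definition add_msq (y : R) : Prop := exists a, pI J a /\ msq (y - a).

Lemma indep_quot t (u : 'I_t -> R) :
  indep_mod (@msq _) (fun i => qproj J (u i)) <-> indep_mod add_msq u.
Proof.
have idJ := pI_ideal J.
split=> [indQ c [a [Ja msq_ca]] i|ind c].
  apply/qproj_mx; apply: (indQ (fun i => qproj J (c i))).
  rewrite msq_quot; exists (\sum_(i < t) c i * u i - a); split => //.
  rewrite rmorphB (qproj_eq0 J a).2 // subr0 rmorph_sum.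
  by apply: eq_bigr => j _; rewrite rmorphM.
rewrite qproj_sum msq_quot => [[y [msq_y /qproj_eq J_yc]]] i.
rewrite -(qproj_repr (c i)) qproj_mx; apply: (ind (fun i => repr (c i))).
exists (\sum_(i < t) repr (c i) * u i - y); split.
  by rewrite -opprB; apply: idealN.
by rewrite opprB addrC subrK.
Qed.

Lemma edim_quot d : kdim_eq (@mx R) add_msq d -> edim_eq (quot_ring J) d.
Proof.
move=> [[v [mv indv]] maxd]; split.
  by exists (fun i => qproj J (v i)); split; [move=> i; apply/qproj_mx | apply/indep_quot].
move=> t u mu indu; apply: (maxd t (fun i => repr (u i))).
  by move=> i; rewrite -qproj_mx qproj_repr.
by apply/indep_quot; under eq_fun do rewrite qproj_repr.
Qed.

End LocalQuotient.

Section ResidueField.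
Variables (R : comUnitRingType) (loc : is_local R).

Definition mpideal : pideal R := mkpideal (mx_ideal loc) (fun y my => my).
Definition residue_field := quot_ring mpideal.
HB.instance Definition _ := GRing.ComUnitRing.on residue_field.

Lemma residue_field_axiom : GRing.field_axiom residue_field.
Proof.
move=> s; have [y <-] := qproj_surj s => /eqP nz_y.
apply/(qproj_unit loc (J := mpideal)) => //; case: (mx_or_unit y) => // my.
by case: nz_y; apply/qproj_eq0.
Qed.
HB.instance Definition _ := GRing.ComUnitRing_isField.Build residue_field residue_field_axiom.

Definition kproj : {rmorphism R -> residue_field} := qproj mpideal.

Lemma kproj_eq0 a : kproj a = 0 <-> mx a. Proof. exact: qproj_eq0. Qed.

End ResidueField.

Section ResidueOfQuotient.
Variables (R : comUnitRingType) (loc : is_local R) (J : pideal R).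
Hypothesis Jm : forall y, pI J y -> mx y.

Definition qres_fun (s : quot_ring J) : residue_field loc := kproj loc (repr s).

Lemma qres_fun_qproj y : qres_fun (qproj J y) = kproj loc y.
Proof. by apply/(qproj_eq (mpideal loc)); apply: Jm; apply/qproj_eq; exact: qproj_repr. Qed.

Lemma qres_zmod : zmod_morphism qres_fun.
Proof.
move=> s t; have [y <-] := qproj_surj s; have [z <-] := qproj_surj t.
by rewrite -rmorphB !qres_fun_qproj rmorphB.
Qed.

Lemma qres_monoid : monoid_morphism qres_fun.
Proof.
split=> [|s t]; first by rewrite -(rmorph1 (qproj J)) qres_fun_qproj rmorph1.
have [y <-] := qproj_surj s; have [z <-] := qproj_surj t.
by rewrite -rmorphM !qres_fun_qproj rmorphM.
Qed.

HB.instance Definition _ :=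
  GRing.isZmodMorphism.Build (quot_ring J) (residue_field loc) qres_fun qres_zmod.
HB.instance Definition _ :=
  GRing.isMonoidMorphism.Build (quot_ring J) (residue_field loc) qres_fun qres_monoid.
Definition qres : {rmorphism quot_ring J -> residue_field loc} := qres_fun.

Lemma qres_qproj y : qres (qproj J y) = kproj loc y. Proof. exact: qres_fun_qproj. Qed.

Lemma residue_map_qres : residue_map qres.
Proof.
split=> [c|s]; first by have [a <-] := qproj_surj c; exists (qproj J a); apply: qres_qproj.
by have [y <-] := qproj_surj s; rewrite qres_qproj kproj_eq0 (qproj_mx loc Jm).
Qed.

End ResidueOfQuotient.

Section FibreProduct.
Variables (R : comUnitRingType) (loc : is_local R) (Z W : pideal R).
Hypotheses (Zm : forall y, pI Z y -> mx y) (Wm : forall y, pI W y -> mx y).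
Hypothesis ZW0 : forall y, pI Z y -> pI W y -> y = 0.
Hypothesis ZWm : forall y, mx y -> exists a b, [/\ pI Z a, pI W b & y = a + b].

Lemma fibre_iso_quot : fibre_iso (qproj Z) (qproj W) (qres loc Zm) (qres loc Wm).
Proof.
do 2 (split; first exact: residue_map_qres); split.
  move=> x y /qproj_eq Zxy /qproj_eq Wxy; apply/eqP; rewrite -subr_eq0; apply/eqP.
  exact: ZW0.
move=> s t; split; last by move=> [x [<- <-]]; rewrite !qres_qproj.
have [y <-] := qproj_surj s; have [z <-] := qproj_surj t.
rewrite !qres_qproj => /(qproj_eq (mpideal loc)) /ZWm [a [b [Za Wb yzab]]].
exists (y - a); split; apply/qproj_eq.
  by rewrite addrAC subrr add0r; apply: (idealN (pI_ideal Z)).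
by rewrite addrAC yzab (addrC a) addrK.
Qed.

End FibreProduct.

Lemma indep_mod0_single (R : comUnitRingType) (h : R) :
  h != 0 -> indep_mod (fun x : R => x = 0) (fun _ : 'I_1 => h).
Proof.
move=> nz_h c; rewrite big_ord1 => ch0 i; rewrite (ord1 i).
by case: (mx_or_unit (c ord0)) => // Uc; case/eqP: nz_h; apply: unit_mul_eq0 ch0.
Qed.

Lemma socdim_gt0 (R : comUnitRingType) (h : R) r :
  socdim_eq R r -> h != 0 -> soc h -> (0 < r)%N.
Proof. by move=> [_ maxr] nz_h sh; apply: (maxr 1%N (fun=> h)) => //; apply: indep_mod0_single. Qed.

Lemma gorenstein_of_principal_soc (R : comUnitRingType) (h : R) :
  h != 0 -> soc h -> (forall s, soc s -> exists c, s = c * h) -> gorenstein R.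
Proof.
move=> nz_h sh socP; split; first by exists (fun _ => h); split => //; apply: indep_mod0_single.
move=> t v sv indv; rewrite leqNgt; apply/negP => lt1t.
pose i0 := Ordinal (ltn_trans (ltn0Sn 0) lt1t); pose i1 := Ordinal lt1t.
have [a va] := socP _ (sv i0); have [b vb] := socP _ (sv i1).
pose c i := if i == i0 then b else if i == i1 then - a else 0.
have : \sum_(i < t) c i * v i = 0.
  rewrite (bigD1 i0) // (bigD1 i1) //= big1 ?addr0 => [|i /andP [ne0 ne1]].
    by rewrite /c /= va vb; ring.
  by rewrite /c (negPf ne0) (negPf ne1) mul0r.
move=> /indv /(_ i1); rewrite /c /= => /mxN; rewrite opprK => ma.
have : \sum_(i < t) (if i == i0 then 1 else 0) * v i = 0.
  rewrite (bigD1 i0) // big1 ?addr0 => [|i /negPf->]; last by rewrite mul0r.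
  by rewrite eqxx /= mul1r va mulrC sh ?addr0.
by move=> /indv /(_ i0); rewrite eqxx => /not_mx1.
Qed.

Section StretchedSocle.
Variables (R : comUnitRingType) (loc : is_local R) (art : artinian R).

Lemma artinian_mx_pow_mul_eq0 (y x : R) : mx y -> exists N, y ^+ N * x = 0.
Proof.
move=> my; pose I i z := exists c, z = c * (y ^+ i * x).
have idI i : is_ideal (I i) := principal_ideal (y ^+ i * x).
have decI i z : I i.+1 z -> I i z by move=> [c ->]; exists (c * y); rewrite exprS; ring.
have [N stabN] := art idI decI.
have [c Nc] : I N.+1 (y ^+ N * x) by apply/(stabN N.+1) => //; exists 1; rewrite mul1r.
exists N; apply: (@mx_fix_eq0 _ loc (c * y)); first exact: mxMl.
by rewrite {1}Nc exprS; ring.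
Qed.

Lemma soc_msq_principal_of_msq_eq0 :
  (forall s : R, msq s -> s = 0) ->
  exists h : R, [/\ h != 0, soc h & forall s, soc s -> msq s -> exists c, s = c * h].
Proof.
move=> msq_eq0.
case: (pselect (exists x : R, mx x /\ x != 0)) => [[x [mx_x nz_x]]|m0].
  exists x; split => // [w mw|s ss /msq_eq0 ->]; first by apply: msq_eq0; apply: msqMM.
  by exists 0; rewrite mul0r.
exists 1; split => [|w mw|s ss /msq_eq0 ->]; first exact: oner_neq0.
  by rewrite mul1r; apply/eqP; apply: contraT => nz_w; case: m0; exists w.
by exists 0; rewrite mul0r.
Qed.

Variable g : R.
Hypothesis msqg : forall x, msq x <-> exists c, x = c * g.

Lemma stretched_gen_split : g = 0 \/ exists y z, [/\ mx y, mx z & g = y * z].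
Proof.
have [t [a [b [mab gab]]]] : msq g by apply/msqg; exists 1; rewrite mul1r.
case: (pselect (exists i d, d \is a GRing.unit /\ a i * b i = d * g)).
  move=> [i [d [Ud abd]]]; right; exists (a i), (d^-1 * b i).
  have [ma mb] := mab i; split => //; first exact: mxMl.
  by rewrite mulrCA abd mulrA mulVr ?mul1r.
move=> nU; left.
have [d [md gd]] : exists d, mx d /\ g = d * g.
  rewrite {1}gab; apply: (big_ind (fun x => exists d, mx d /\ x = d * g)).
  - by exists 0; rewrite mul0r; split => //; exact: mx0.
  - move=> x y [d [md ->]] [d' [md' ->]]; exists (d + d').
    by rewrite mulrDl; split => //; apply: loc.
  - move=> i _; have [ma mb] := mab i.
    have [d abd] := (msqg (a i * b i)).1 (msqMM ma mb).
    exists d; split => //; case: (mx_or_unit d) => // Ud.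
    by case: nU; exists i, d.
exact: mx_fix_eq0 md gd.
Qed.

Section Factored.
Variables y z : R.
Hypotheses (my : mx y) (mz : mx z) (gyz : g = y * z).

(* x z lies in m^2 = (g) *)
Lemma mx_mul_pow_gen j x : mx x -> exists e, x * (y ^+ j * g) = e * (y ^+ j.+1 * g).
Proof.
move=> mx_x; have [e xze] := (msqg (x * z)).1 (msqMM mx_x mz).
exists e; rewrite {1}gyz exprS.
by transitivity (y * y ^+ j * (x * z)); [ring | rewrite xze; ring].
Qed.

Lemma soc_msq_principal_factored : g != 0 ->
  exists h : R, [/\ h != 0, soc h & forall s, soc s -> msq s -> exists c, s = c * h].
Proof.
move=> nz_g; have [N yNg0] := artinian_mx_pow_mul_eq0 g my.
have exN : exists N, y ^+ N * g == 0 by exists N; rewrite yNg0.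
case: (ex_minnP exN) => N0 /eqP yN0g0 minN0.
have N0_gt0 : (0 < N0)%N.
  by rewrite lt0n; apply: (contra_neq _ nz_g) => N00; rewrite -yN0g0 N00 expr0 mul1r.
set h := y ^+ N0.-1 * g.
have nz_h : h != 0 by apply/eqP => h0; have := minN0 N0.-1 (introT eqP h0); lia.
have soc_h : soc h.
  move=> x mx_x; rewrite mulrC /h; have [e ->] := mx_mul_pow_gen N0.-1 mx_x.
  by rewrite prednK // yN0g0 mulr0.
exists h; split => // s ss msq_s; have [a sa] := (msqg s).1 msq_s.
(* downward induction on j: a unit multiple of y^j g in the socle forces y^(j+1) g = 0 *)
suff socP k j b : (N0.-1 <= j + k)%N -> soc (b * (y ^+ j * g)) ->
    exists c, b * (y ^+ j * g) = c * h.
  by have := socP N0.-1 0%N a; rewrite expr0 mul1r add0n -sa; apply.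
elim: k j b => [|k IHk] j b le_j sb.
  exists (b * y ^+ (j - N0.-1)).
  have -> : y ^+ j = y ^+ (j - N0.-1) * y ^+ N0.-1 by rewrite -exprD subnK //; lia.
  by rewrite /h; ring.
case: (mx_or_unit b) => [mb|Ub].
  by have [e be] := mx_mul_pow_gen j mb; rewrite be in sb *; apply: IHk => //; lia.
have : y ^+ j.+1 * g = 0.
  by apply: (unit_mul_eq0 Ub); rewrite exprS -(sb y my); ring.
by move=> /(introT eqP) /minN0 le_N0; apply: IHk => //; lia.
Qed.

End Factored.

Lemma soc_msq_principal :
  exists h : R, [/\ h != 0, soc h & forall s, soc s -> msq s -> exists c, s = c * h].
Proof.
have msq_eq0 : g = 0 -> forall s : R, msq s -> s = 0.
  by move=> g0 s /msqg [c ->]; rewrite g0 mulr0.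
case: stretched_gen_split => [g0|[y [z [my mz gyz]]]].
  exact/soc_msq_principal_of_msq_eq0/msq_eq0.
have [g0|nz_g] := eqVneq g 0; first exact/soc_msq_principal_of_msq_eq0/msq_eq0.
exact: soc_msq_principal_factored my mz gyz nz_g.
Qed.

Lemma gorenstein_of_soc_sub_msq : (forall x : R, soc x -> msq x) -> gorenstein R.
Proof.
move=> soc_msq; have [h [nz_h soc_h socP]] := soc_msq_principal.
by apply: (gorenstein_of_principal_soc nz_h soc_h) => s ss; apply: socP => //; apply: soc_msq.
Qed.

End StretchedSocle.

Lemma gorenstein_quot (R : comUnitRingType) (loc : is_local R) (J : pideal R)
    (Jm : forall y, pI J y -> mx y) (h : R) :
  (forall y, pI J y -> msq y -> y = 0) -> mx h -> soc h -> ~ pI J h ->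
  (forall s, soc s -> exists a c, pI J a /\ s = a + c * h) ->
  gorenstein (quot_ring J).
Proof.
move=> J_msq0 mh sh nJh socP; have qproj_mx := qproj_mx loc Jm.
apply: (@gorenstein_of_principal_soc _ (qproj J h)).
- by apply/eqP => /qproj_eq0.
- move=> t; have [w <-] := qproj_surj t; rewrite qproj_mx => mw.
  by rewrite -rmorphM sh // rmorph0.
move=> s; have [y <-] := qproj_surj s => sy.
case: (mx_or_unit y) => [my|Uy]; last first.
  have := sy _ ((qproj_mx h).2 mh); rewrite -rmorphM => /qproj_eq0.
  by move=> /(idealMl (pI_ideal J) y^-1); rewrite mulKr.
have soc_y : soc y.
  move=> w mw; apply: J_msq0; last exact: msqMM.
  by apply/qproj_eq0; rewrite rmorphM; apply: sy; rewrite qproj_mx.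
have [a [c [Ja ->]]] := socP y soc_y; exists (qproj J c).
by rewrite rmorphD rmorphM (qproj_eq0 J a).2 // add0r.
Qed.

Lemma kdim_span (R : comUnitRingType) (V J : R -> Prop) t (f : 'I_t -> R) x :
  is_ideal J -> kdim_eq V J t -> (forall i, V (f i)) -> indep_mod J f ->
  V x -> (forall e, mx e -> J (e * x)) ->
  exists a : 'I_t -> R, J (x - \sum_(i < t) a i * f i).
Proof.
move=> idJ [_ maxt] Vf indf Vx Jmx.
have : ~ indep_mod J (catf f (fun _ : 'I_1 => x)).
  by move=> /(maxt _ _ (catfP Vf (fun=> Vx))); rewrite addn1 ltnn.
move=> /existsNP [c /not_implyP [Jc /existsNP [i0 nm_c]]].
rewrite big_catf big_ord1 in Jc; set e := c (rshift t ord0) in Jc.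
case: (mx_or_unit e) => [me|Ue].
  have : J (\sum_(i < t) c (lshift 1 i) * f i).
    by rewrite -[X in J X](addrK (e * x)); apply: idealB => //; apply: Jmx.
  move=> /indf mcl; case: (split_ordP i0) nm_c => j -> //.
  by rewrite (ord1 j).
exists (fun i => - e^-1 * c (lshift 1 i)).
have -> : \sum_(i < t) - e^-1 * c (lshift 1 i) * f i =
          - (e^-1 * \sum_(i < t) c (lshift 1 i) * f i).
  by rewrite mulr_sumr -sumrN; apply: eq_bigr => i _; rewrite !mulNr mulrA.
rewrite opprK -[x](mulKr Ue) -mulrDr addrC.
exact: idealMl.
Qed.

Lemma soc_basis_exchange (R : comUnitRingType) r (h : R) :
  is_local R -> socdim_eq R r.+1 -> h != 0 -> soc h ->
  exists z : 'I_r -> R, [/\ forall j, soc (z j),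
    indep_mod (fun x : R => x = 0) (catf z (fun _ : 'I_1 => h)) &
    forall s, soc s -> exists (a : 'I_r -> R) c, s = \sum_(j < r) a j * z j + c * h].
Proof.
move=> loc sd nz_h sh; have [[w [sw indw]] _] := sd.
have soc_ann (x e : R) : soc x -> mx e -> e * x = 0 by move=> sx me; rewrite mulrC sx.
have [a] := kdim_span (zero_ideal R) sd sw indw sh (fun e => soc_ann h e sh).
move=> /eqP; rewrite subr_eq0 => /eqP hw.
have [i1 Ua] : exists i1, a i1 \is a GRing.unit.
  apply: contrapT => nU; case/eqP: nz_h; rewrite hw big1 // => i _.
  by case: (mx_or_unit (a i)) => [ma|Ua]; [rewrite soc_ann | case: nU; exists i].
pose z j := w (lift i1 j).
have hwz : h = a i1 * w i1 + \sum_(j < r) a (lift i1 j) * z j by rewrite hw (bigD1_ord i1).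
have indzh : indep_mod (fun x : R => x = 0) (catf z (fun _ : 'I_1 => h)).
  move=> c; rewrite big_catf big_ord1; set e := c (rshift r ord0) => czh0.
  (* substituting h = sum_i a_i w_i turns the relation into one among the w_i *)
  pose c' i := if unlift i1 i is Some j then c (lshift 1 j) + e * a i else e * a i.
  have : \sum_(i < r.+1) c' i * w i = 0.
    rewrite (bigD1_ord i1) //= /c' unlift_none; under eq_bigr => j _ do rewrite liftK.
    have -> : \sum_(j < r) (c (lshift 1 j) + e * a (lift i1 j)) * w (lift i1 j) =
        \sum_(j < r) c (lshift 1 j) * z j + e * \sum_(j < r) a (lift i1 j) * z j.
      by rewrite mulr_sumr -big_split; apply: eq_bigr => j _; rewrite /z /=; ring.
    by rewrite -[RHS]czh0 hwz; ring.
  move=> /indw mc'; have me : mx e.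
    have := mc' i1; rewrite /c' unlift_none; case: (mx_or_unit e) => // Ue.
    by move=> m; case: (unit_not_mx _ m); rewrite unitrM Ue Ua.
  move=> i; case: (split_ordP i) => j ->; last by rewrite (ord1 j).
  have := mxB loc (mc' (lift i1 j)) (mxMr (a (lift i1 j)) me).
  by rewrite /c' liftK addrK.
exists z; split => // [j|s ss]; first exact: sw.
have sd' : socdim_eq R (r + 1) by rewrite addn1.
have [b] := kdim_span (zero_ideal R) sd' (catfP (fun j => sw _) (fun=> sh)) indzh ss
  (fun e => soc_ann s e ss).
rewrite big_catf big_ord1 => /eqP; rewrite subr_eq0 => /eqP ->.
by exists (fun j => b (lshift 1 j)), (b (rshift r ord0)).
Qed.

Section Coordinates.
Variables (R : comUnitRingType) (loc : is_local R) (n : nat) (v : 'I_n -> R).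
Hypotheses (ed : edim_eq R n) (mv : forall i, mx (v i)) (indv : indep_mod (@msq R) v).

Local Notation k := (residue_field loc).
Local Notation pi := (kproj loc).

Lemma coef_exists y : exists c : 'I_n -> R, mx y -> msq (y - \sum_(i < n) c i * v i).
Proof.
case: (pselect (mx y)) => my; last by exists (fun=> 0).
have [c yc] := kdim_span (msq_ideal R) ed mv indv my (fun e me => msqMM me my).
by exists c.
Qed.

Definition coef (y : R) : 'I_n -> R := projT1 (cid (coef_exists y)).

Lemma coefP y : mx y -> msq (y - \sum_(i < n) coef y i * v i).
Proof. exact: (projT2 (cid (coef_exists y))). Qed.

(* the class of y in m/m^2 = k^n, in the basis v; meaningless outside m *)
Definition mcoord (y : R) : 'rV[k]_n := \row_i pi (coef y i).

Lemma mcoord_eq y d : mx y -> msq (y - \sum_(i < n) d i * v i) -> mcoord y = \row_i pi (d i).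
Proof.
move=> my msq_yd; apply/rowP => i; rewrite !mxE; apply/(qproj_eq (mpideal loc)).
apply: (indv (c := fun i => coef y i - d i)).
have -> : \sum_(i < n) (coef y i - d i) * v i =
    (y - \sum_(i < n) d i * v i) - (y - \sum_(i < n) coef y i * v i).
  by rewrite (eq_bigr _ (fun i _ => mulrBl _ _ _)) sumrB; ring.
by apply: (idealB (msq_ideal R)) => //; apply: coefP.
Qed.

Lemma row_kproj_eq0 t (c : 'I_t -> R) : \row_i pi (c i) = 0 -> forall i, mx (c i).
Proof. by move=> /rowP c0 i; have := c0 i; rewrite !mxE => /kproj_eq0. Qed.

Lemma row_kproj_repr t (u : 'rV[k]_t) : \row_i pi (repr (u 0 i)) = u.
Proof. by apply/rowP => i; rewrite !mxE; apply: qproj_repr. Qed.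

Definition lift_row (a : 'rV[k]_n) : R := \sum_(i < n) repr (a 0 i) * v i.

Lemma lift_row_mx a : mx (lift_row a). Proof. exact: mx_comb. Qed.

Lemma mcoord_lift_row a : mcoord (lift_row a) = a.
Proof.
rewrite (@mcoord_eq _ (fun i => repr (a 0 i))) ?row_kproj_repr //; first exact: lift_row_mx.
by rewrite /lift_row subrr; apply: msq0.
Qed.

Lemma mcoord_msq y : msq y -> mcoord y = 0.
Proof.
move=> msq_y; rewrite (@mcoord_eq _ (fun _ => 0)).
- by apply/rowP => i; rewrite !mxE rmorph0.
- exact: msq_mx.
- by rewrite big1 ?subr0 // => i _; rewrite mul0r.
Qed.

Lemma msq_mcoord0 y : mx y -> mcoord y = 0 -> msq y.
Proof.
move=> my /row_kproj_eq0 mcoef; rewrite -(subrK (\sum_(i < n) coef y i * v i) y).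
apply: msqD; first exact: coefP.
by apply: (ideal_sum (msq_ideal R)) => i; apply: msqMM.
Qed.

Lemma mcoordB x y : mx x -> mx y -> mcoord (x - y) = mcoord x - mcoord y.
Proof.
move=> mx_x my; rewrite (@mcoord_eq _ (fun i => coef x i - coef y i)); first last.
- have -> : x - y - \sum_(i < n) (coef x i - coef y i) * v i =
      (x - \sum_(i < n) coef x i * v i) - (y - \sum_(i < n) coef y i * v i).
    by rewrite (eq_bigr _ (fun i _ => mulrBl _ _ _)) sumrB; ring.
  by apply: (idealB (msq_ideal R)); apply: coefP.
- exact: mxB.
by apply/rowP => i; rewrite !mxE rmorphB.
Qed.

Lemma mcoordMl a y : mx y -> mcoord (a * y) = pi a *: mcoord y.
Proof.
move=> my; rewrite (@mcoord_eq _ (fun i => a * coef y i)); first last.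
- have -> : a * y - \sum_(i < n) a * coef y i * v i = a * (y - \sum_(i < n) coef y i * v i).
    by rewrite mulrBr mulr_sumr; congr (_ - _); apply: eq_bigr => i _; rewrite mulrA.
  by apply: msqMl; apply: coefP.
- exact: mxMl.
by apply/rowP => i; rewrite !mxE rmorphM.
Qed.

Definition mcoord_mx t (w : 'I_t -> R) : 'M[k]_(t, n) := \matrix_(i, j) mcoord (w i) 0 j.

Lemma mcoord_comb t (w c : 'I_t -> R) : (forall i, mx (w i)) ->
  mcoord (\sum_(i < t) c i * w i) = (\row_i pi (c i)) *m mcoord_mx w.
Proof.
move=> mw; rewrite (@mcoord_eq _ (fun j => \sum_(i < t) c i * coef (w i) j)).
- apply/rowP => j; rewrite !mxE rmorph_sum; apply: eq_bigr => i _.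
  by rewrite !mxE rmorphM.
- exact: mx_comb.
have -> : \sum_(j < n) (\sum_(i < t) c i * coef (w i) j) * v j =
    \sum_(i < t) c i * \sum_(j < n) coef (w i) j * v j.
  under eq_bigr => j _ do rewrite mulr_suml.
  rewrite exchange_big; apply: eq_bigr => i _; rewrite mulr_sumr.
  by apply: eq_bigr => j _; rewrite mulrA.
rewrite -sumrB; apply: (ideal_sum (msq_ideal R)) => i; rewrite -mulrBr.
by apply: msqMl; apply: coefP.
Qed.

Lemma mcoordD x y : mx x -> mx y -> mcoord (x + y) = mcoord x + mcoord y.
Proof.
move=> mx_x my; have mcoordN : mcoord (- y) = - mcoord y.
  rewrite -sub0r mcoordB //; last exact: mx0.
  by rewrite mcoord_msq ?sub0r //; apply: msq0.
by rewrite -[in LHS](opprK y) mcoordB ?mcoordN ?opprK //; apply: mxN.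
Qed.

Definition mcoord_preim p (U : 'M[k]_(p, n)) (y : R) : Prop := mx y /\ (mcoord y <= U)%MS.

Lemma msq_mcoord_preim p (U : 'M[k]_(p, n)) y : msq y -> mcoord_preim U y.
Proof. by move=> msq_y; split; [exact: msq_mx | rewrite mcoord_msq // sub0mx]. Qed.

Lemma mcoord_preim_ideal p (U : 'M[k]_(p, n)) : is_ideal (mcoord_preim U).
Proof.
split=> [|x y [mx_x xU] [my yU]|a y [my yU]]; first exact/msq_mcoord_preim/msq0.
  by split; [exact: loc | rewrite mcoordD // addmx_sub].
by split; [exact: mxMl | rewrite mcoordMl // scalemx_sub].
Qed.

Lemma mcoord_preim0 : mcoord_preim (0 : 'M[k]_n) = @msq R.
Proof.
apply/funext => y; apply/propext; split; last exact: msq_mcoord_preim.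
by move=> [my]; rewrite submx0 => /eqP; apply: msq_mcoord0.
Qed.

Lemma indep_mcoord_preimP p (U : 'M[k]_(p, n)) t (u : 'I_t -> R) :
  (forall i, mx (u i)) ->
  indep_mod (mcoord_preim U) u <->
  (forall q : 'rV[k]_t, (q *m mcoord_mx u <= U)%MS -> q = 0).
Proof.
move=> mu; split=> [indu q qU|qP c [_ cU]].
  rewrite -(row_kproj_repr q); apply/rowP => i; rewrite !mxE; apply/kproj_eq0.
  apply: (indu (fun i => repr (q 0 i))); split; first exact: mx_comb.
  by rewrite mcoord_comb // row_kproj_repr.
by apply: row_kproj_eq0; apply: qP; rewrite -mcoord_comb.
Qed.

Lemma indep_msqP t (u : 'I_t -> R) : (forall i, mx (u i)) ->
  indep_mod (@msq R) u <-> row_free (mcoord_mx u).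
Proof.
move=> mu; rewrite -mcoord_preim0 indep_mcoord_preimP //.
split=> [q0|frA q]; first by apply/inj_row_free => q qA0; apply: q0; rewrite qA0 sub0mx.
by rewrite submx0 mulmx_free_eq0 // => /eqP.
Qed.

Lemma kdim_mcoord_preim p (U : 'M[k]_(p, n)) :
  kdim_eq (@mx R) (mcoord_preim U) (n - \rank U).
Proof.
split.
  rewrite -mxrank_compl; set C := row_base (U^C)%MS.
  exists (fun j => lift_row (row j C)); split => [j|]; first exact: lift_row_mx.
  apply/indep_mcoord_preimP => [j|q]; first exact: lift_row_mx.
  have -> : mcoord_mx (fun j => lift_row (row j C)) = C.
    by apply/matrixP => i j; rewrite mxE mcoord_lift_row mxE.
  move=> qU.
  have : (q *m C <= U :&: U^C)%MS.
    by rewrite sub_capmx qU (submx_trans (submxMl _ _)) // eq_row_base.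
  by rewrite capmx_compl submx0 mulmx_free_eq0 ?row_base_free // => /eqP.
move=> t u mu /(indep_mcoord_preimP U mu) qP; set A := mcoord_mx u.
have frA : row_free A by apply/inj_row_free => q qA0; apply: qP; rewrite qA0 sub0mx.
have capAU : (A :&: U)%MS = 0.
  apply/eqP; rewrite -submx0; apply/rV_subP => w.
  rewrite sub_capmx => /andP [/submxP [q ->] qU].
  by rewrite (qP q qU) mul0mx sub0mx.
by have := rank_leq_col (A + U)%MS; rewrite mxrank_disjoint_sum // (eqP frA); lia.
Qed.

Lemma indep_msq_of_generating (x : 'I_n -> R) : (forall i, mx (x i)) ->
  (forall y, mx y -> exists c : 'I_n -> R, y = \sum_(i < n) c i * x i) ->
  indep_mod (@msq R) x.
Proof.
move=> mx_ gen; apply/indep_msqP => //.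
rewrite row_free_unit -row_full_unit -sub1mx; apply/rV_subP => u _.
have [c uc] := gen _ (lift_row_mx u); apply/submxP; exists (\row_i pi (c i)).
by rewrite -mcoord_comb // -uc mcoord_lift_row.
Qed.

Lemma fibre_split_generators (x : 'I_n -> R) (i0 : 'I_n) :
  (forall i, mx (x i)) ->
  (forall y, mx y -> exists c : 'I_n -> R, y = \sum_(i < n) c i * x i) ->
  soc (x i0) ->
  exists (S T : comUnitRingType) (k : fieldType)
         (p : {rmorphism R -> S}) (q : {rmorphism R -> T})
         (piS : {rmorphism S -> k}) (piT : {rmorphism T -> k}),
    fibre_iso p q piS piT /\
    (forall s : S, exists y, p y = s) /\
    (forall y, p y = 0 <-> exists c, y = c * x i0) /\
    (forall t : T, exists y, q y = t) /\
    (forall y, q y = 0 <->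
       exists c : 'I_n -> R, y = \sum_(j < n | j != i0) c j * x j).
Proof.
move=> mx_ gen soc_x0; have indx := indep_msq_of_generating mx_ gen.
have Zm y : (exists c, y = c * x i0) -> mx y by move=> [c ->]; apply: mxMl.
have Wm y : (exists c : 'I_n -> R, y = \sum_(j < n | j != i0) c j * x j) -> mx y.
  move=> [c ->]; apply: (big_ind (@mx R)); [exact: mx0 | exact: loc |].
  by move=> j _; apply: mxMl.
pose Z := mkpideal (principal_ideal (x i0)) Zm.
pose W := mkpideal (span_ideal (fun j => j != i0) x) Wm.
have ZW0 y : pI Z y -> pI W y -> y = 0.
  move=> [c ->] [d cd]; pose e j := if j == i0 then c else - d j.
  have : msq (\sum_(j < n) e j * x j).
    rewrite (bigD1 i0) //= /e eqxx (eq_bigr (fun j => - (d j * x j))).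
      by rewrite sumrN cd addrN; apply: msq0.
    by move=> j /negPf ->; rewrite mulNr.
  by move=> /indx /(_ i0); rewrite /e eqxx mulrC; apply: soc_x0.
have ZWm y : mx y -> exists a b, [/\ pI Z a, pI W b & y = a + b].
  move=> /gen [c ->]; exists (c i0 * x i0), (\sum_(j < n | j != i0) c j * x j).
  by split; [exists (c i0) | exists c | rewrite (bigD1 i0)].
exists (quot_ring Z), (quot_ring W), (residue_field loc), (qproj Z), (qproj W),
  (@qres _ loc Z Zm), (@qres _ loc W Wm).
split; first exact: fibre_iso_quot.
by do !split; try exact: qproj_surj; rewrite qproj_eq0.
Qed.

Section SocleSplit.
Variables (s : nat) (z : 'I_s -> R).
Hypotheses (soc_z : forall j, soc (z j)) (mz : forall j, mx (z j)).
Hypothesis indz : indep_mod (@msq R) z.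

Local Notation Zc := (mcoord_mx z).

Lemma span_z_mx y : (exists c : 'I_s -> R, y = \sum_(j < s) c j * z j) -> mx y.
Proof. by move=> [c ->]; apply: mx_comb. Qed.

Definition span_pideal := mkpideal (span_ideal xpredT z) span_z_mx.
Definition compl_pideal := mkpideal (mcoord_preim_ideal (Zc^C)%MS) (fun y yW => yW.1).

Lemma rank_mcoord_mx_z : \rank Zc = s.
Proof. by apply/eqP; rewrite -/(row_free Zc) -indep_msqP. Qed.

Lemma span_z_msq_eq0 y : pI span_pideal y -> msq y -> y = 0.
Proof.
move=> [c ->] /indz mc; rewrite big1 // => j _.
by rewrite mulrC; apply: soc_z.
Qed.

Lemma span_cap_compl y : pI span_pideal y -> pI compl_pideal y -> y = 0.
Proof.
move=> [c yc] [_ yU]; rewrite yc in yU *.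
apply: (span_z_msq_eq0 (ex_intro _ c erefl)); apply: msq_mcoord0; first exact: mx_comb.
have : (mcoord (\sum_(j < s) c j * z j) <= Zc :&: Zc^C)%MS.
  by rewrite sub_capmx yU mcoord_comb // submxMl.
by rewrite capmx_compl submx0 => /eqP.
Qed.

Lemma span_add_compl y : mx y ->
  exists a b, [/\ pI span_pideal a, pI compl_pideal b & y = a + b].
Proof.
move=> my; have : (mcoord y <= Zc + Zc^C)%MS by apply/submx_full/addsmx_compl_full.
case/sub_addsmxP => [[q1 q2] /= yq].
pose a := \sum_(j < s) repr (q1 0 j) * z j.
have ma : mx a by apply: mx_comb.
exists a, (y - a); split; [by exists (fun j => repr (q1 0 j)) | | by rewrite addrC subrK].
split; first exact: mxB.
by rewrite mcoordB // mcoord_comb // row_kproj_repr yq addrAC subrr add0r submxMl.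
Qed.

Lemma edim_span_quot : edim_eq (quot_ring span_pideal) (n - s).
Proof.
apply: (@edim_quot _ loc span_pideal span_z_mx).
have -> : add_msq span_pideal = mcoord_preim Zc.
  apply/funext => y; apply/propext; split.
    move=> [a [[c ac] msq_ya]]; have ma : mx a by rewrite ac; apply: mx_comb.
    rewrite -(subrK a y); split; first by apply: loc => //; exact: msq_mx.
    rewrite mcoordD //; last exact: msq_mx.
    by rewrite mcoord_msq // add0r ac mcoord_comb // submxMl.
  move=> [my /submxP [q yq]]; pose a := \sum_(j < s) repr (q 0 j) * z j.
  have ma : mx a by apply: mx_comb.
  exists a; split; first by exists (fun j => repr (q 0 j)).
  by apply: msq_mcoord0; [exact: mxB | rewrite mcoordB // mcoord_comb // row_kproj_repr yq subrr].
by have := kdim_mcoord_preim Zc; rewrite rank_mcoord_mx_z.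
Qed.

Lemma edim_compl_quot : edim_eq (quot_ring compl_pideal) s.
Proof.
apply: (@edim_quot _ loc compl_pideal (fun y yW => yW.1)).
have -> : add_msq compl_pideal = mcoord_preim (Zc^C)%MS.
  apply/funext => y; apply/propext; split => [[a [Wa msq_ya]]|Wy]; last first.
    by exists y; rewrite subrr; split => //; apply: msq0.
  rewrite -(subrK a y); apply: (idealD (mcoord_preim_ideal _)) => //.
  exact: msq_mcoord_preim.
have s_le_n : (s <= n)%N by rewrite -rank_mcoord_mx_z rank_leq_col.
by have := kdim_mcoord_preim (Zc^C)%MS; rewrite mxrank_compl rank_mcoord_mx_z subKn.
Qed.

Lemma msq_compl_quot_eq0 (y : quot_ring compl_pideal) : msq y -> y = 0.
Proof.
move=> /(msq_quot loc (fun y (yW : pI compl_pideal y) => yW.1)) [x [msq_x <-]].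
by apply/qproj_eq0; apply: msq_mcoord_preim.
Qed.

End SocleSplit.

Lemma fibre_split_non_gorenstein (g : R) r : artinian R ->
  (forall x, msq x <-> exists c, x = c * g) -> socdim_eq R r.+1 -> ~ gorenstein R ->
  exists (S T : comUnitRingType) (k : fieldType)
         (p : {rmorphism R -> S}) (q : {rmorphism R -> T})
         (piS : {rmorphism S -> k}) (piT : {rmorphism T -> k}),
    [/\ fibre_iso p q piS piT,
      [/\ artinian S, is_local S, stretched S, gorenstein S & edim_eq S (n - r)],
      [/\ is_local T, (forall y : T, msq y -> y = 0) & edim_eq T r] & (r <= n)%N].
Proof.
move=> art msqg sd ngor; have [h [nz_h sh soc_msq_h]] := soc_msq_principal loc art msqg.
have mh : mx h.
  case: (mx_or_unit h) => // Uh; case: ngor.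
  by apply: (gorenstein_of_principal_soc nz_h sh) => s _; exists (s * h^-1); rewrite mulrVK.
have [z [sz indzh socP]] := soc_basis_exchange loc sd nz_h sh.
have mz j : mx (z j) := soc_mx nz_h mh (sz j).
have indz : indep_mod (@msq R) z.
  move=> c msq_c j; have [b cb] : exists b, \sum_(j < r) c j * z j = b * h.
    apply: soc_msq_h msq_c; apply: (ideal_sum (soc_ideal R)) => i.
    exact/(idealMl (soc_ideal R)).
  have : \sum_(i < r + 1) catf c (fun=> - b) i * catf z (fun=> h) i = 0.
    by rewrite big_catf2 big_ord1 cb mulNr subrr.
  by move=> /indzh /(_ (lshift 1 j)); rewrite catf_lshift.
pose Z := span_pideal mz; pose W := compl_pideal z.
have nZh : ~ pI Z h.
  move=> [c hc]; have : \sum_(i < r + 1) catf c (fun=> -1) i * catf z (fun=> h) i = 0.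
    by rewrite big_catf2 big_ord1 -hc mulN1r subrr.
  move=> /indzh /(_ (rshift r ord0)); rewrite catf_rshift.
  by move=> /mxN; rewrite opprK => /not_mx1.
have Zm y : pI Z y -> mx y := span_z_mx mz (y := y).
have Wm y : pI W y -> mx y := fun yW => yW.1.
exists (quot_ring Z), (quot_ring W), (residue_field loc), (qproj Z), (qproj W),
  (qres loc Zm), (qres loc Wm).
split.
- apply: fibre_iso_quot; [exact: span_cap_compl | exact: span_add_compl].
- split; [exact: artinian_quot | exact: (local_quot loc Zm) | | | exact: edim_span_quot].
    by apply: stretched_quot; last exists g.
  apply: (gorenstein_quot loc Zm _ mh sh nZh) => [y|s ss]; first exact: span_z_msq_eq0.
  have [a [c ->]] := socP s ss.
  by exists (\sum_(j < r) a j * z j), c; split => //; exists a.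
- split; [exact: (local_quot loc Wm) | exact: msq_compl_quot_eq0 | exact: edim_compl_quot].
- by rewrite -(rank_mcoord_mx_z mz indz) rank_leq_col.
Qed.

End Coordinates.

Unset Implicit Arguments.
Theorem mainTheorem8 (R : comUnitRingType) (n r : nat) :
  artinian R -> is_local R -> stretched R ->
  edim_eq R n -> socdim_eq R r ->
  (gorenstein R \/
   exists (S T : comUnitRingType) (k : fieldType)
          (p : {rmorphism R -> S}) (q : {rmorphism R -> T})
          (piS : {rmorphism S -> k}) (piT : {rmorphism T -> k}),
     fibre_iso p q piS piT /\
     [/\ artinian S, is_local S, stretched S, gorenstein S & edim_eq S (n + 1 - r)] /\
     (n + 1 = (n + 1 - r) + r)%N /\
     [/\ is_local T, (forall y : T, msq y -> y = 0) & edim_eq T (r - 1)] /\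
     (r = (r - 1).+1)%N)
  /\
  ((forall x : R, soc x -> msq x) -> gorenstein R)
  /\
  (forall (x : 'I_n -> R) (i0 : 'I_n),
     (forall i, mx (x i)) ->
     (forall y : R, mx y -> exists c : 'I_n -> R, y = \sum_(i < n) c i * x i) ->
     soc (x i0) -> ~ msq (x i0) ->
     exists (S T : comUnitRingType) (k : fieldType)
            (p : {rmorphism R -> S}) (q : {rmorphism R -> T})
            (piS : {rmorphism S -> k}) (piT : {rmorphism T -> k}),
       fibre_iso p q piS piT /\
       (forall s : S, exists y, p y = s) /\
       (forall y, p y = 0 <-> exists c, y = c * x i0) /\
       (forall t : T, exists y, q y = t) /\
       (forall y, q y = 0 <->
          exists c : 'I_n -> R, y = \sum_(j < n | j != i0) c j * x j)).
Proof.
move=> art loc [g msqg] ed sd; have [[v [mv indv]] _] := ed.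
split; last split.
- have [gor|ngor] := pselect (gorenstein R); [by left | right].
  have [h [nz_h sh _]] := soc_msq_principal loc art msqg.
  case: r sd (socdim_gt0 sd nz_h sh) => // r sd _.
  have [S [T [k [p [q [piS [piT [fib Sprops Tprops le_rn]]]]]]]] :=
    fibre_split_non_gorenstein loc ed mv indv art msqg sd ngor.
  exists S, T, k, p, q, piS, piT; rewrite addn1 !subSS subn0.
  by do !split => //; lia.
- exact: (gorenstein_of_soc_sub_msq loc art msqg).
(* [~ msq (x i0)] is automatic: a generating family of size edim R is minimal *)
- by move=> x i0 mx_ gen soc_x0 _; exact: (fibre_split_generators loc ed mv indv mx_ gen soc_x0).
Qed.
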